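(* Let $i,j\in[s]$. If $\varphi$ is a homomorphism from $F_i^{\bullet\bullet}$ to $F_j^{\bullet\bullet}$ (both viewed as ordinary digraphs), then $\varphi(z_i),\varphi(w_i)\in\{z_j,w_j\}$.
   Context: All digraphs are finite and loopless; a tournament is a digraph in which every pair of distinct vertices is joined by exactly one arc. A homomorphism from a digraph $F$ to a digraph $H$ is a map $\varphi:V(F)\to V(H)$ with $(\varphi(u),\varphi(v))\in E(H)$ whenever $(u,v)\in E(F)$. Construction of $F_i^{\bullet\bullet}$: fix $s\in\mathbb{N}^+$, a positive integer $m$, and a tournament $F_0$ on vertex set $[m]$ satisfying: (I) every vertex has out-degree and in-degree at most $2m/3$; (II) there are no disjoint $A_1,A_2\subseteq[m]$ with $|A_1|=|A_2|=\lceil\sqrt m\,\rceil$ such that $(a_1,a_2)$ is an arc for all $a_1\in A_1,a_2\in A_2$; (III) for every $S\subseteq[m]$ with $|S|\ge 2m/13-\sqrt m$, $F_0[S]$ contains a directed cycle. Let $k_1,\dots,k_s$ be integers in the open interval $(2m/3+2,\,5m/6)$ with $k_i>k_{i+1}+1$ for $1\le i<s$. For $i\in[s]$, $F_i^{\bullet\bullet}$ is the digraph on vertex set $[m]\cup\{z_i,w_i\}$ ($z_i,w_i$ two new vertices, called roots) whose arcs are all arcs of $F_0$, together with the arcs $z_i\to v$ and $v\to w_i$ for every $1\le v\le k_i$, and the arcs $u\to z_i$ and $w_i\to u$ for every $k_i<u\le m$. There is no arc between $z_i$ and $w_i$. *)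

From HB Require Import structures.
From mathcomp Require Import all_boot all_order all_algebra.
From mathcomp Require Import reals.
Set Implicit Arguments. Unset Strict Implicit. Unset Printing Implicit Defensive.
Import Order.TTheory GRing.Theory Num.Theory.

Definition is_hom (V V' : finType) (E : rel V) (E' : rel V') (f : V -> V') : Prop :=
  forall u v, E u v -> E' (f u) (f v).

Definition is_tournament (m : nat) (F0 : rel 'I_m) : Prop :=
  (forall u, ~~ F0 u u) /\ (forall u v, u != v -> F0 u v != F0 v u).

Definition outdeg (m : nat) (F0 : rel 'I_m) (u : 'I_m) : nat := #|[set v | F0 u v]|.
Definition indeg (m : nat) (F0 : rel 'I_m) (u : 'I_m) : nat := #|[set v | F0 v u]|.

Definition has_dicycle (m : nat) (F0 : rel 'I_m) (S : {set 'I_m}) : Prop :=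
  exists c : seq 'I_m, [/\ 2 <= size c, uniq c, all (fun x => x \in S) c & cycle F0 c].

(* Vertex set of F_i^{bullet bullet}: the vertex labelled a+1 (a : 'I_m) is
   inl a, the root z_i is inr true and the root w_i is inr false. *)
Definition Vbb (m : nat) : finType := ('I_m + bool)%type.
Definition zr (m : nat) : Vbb m := inr true.
Definition wr (m : nat) : Vbb m := inr false.

Definition Fbb (m : nat) (F0 : rel 'I_m) (k : nat) : rel (Vbb m) :=
  fun x y =>
    match x, y with
    | inl a, inl b => F0 a b
    | inr true, inl b => b.+1 <= k        (* z -> v, 1 <= v <= k *)
    | inl a, inr false => a.+1 <= k       (* v -> w, 1 <= v <= k *)
    | inl a, inr true => k < a.+1         (* u -> z, k < u <= m *)
    | inr false, inl b => k < b.+1        (* w -> u, k < u <= m *)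
    | _, _ => false
    end.

From HB Require Import structures.
From mathcomp Require Import all_boot all_order all_algebra.
From mathcomp Require Import reals.
From mathcomp Require Import lra.
Import Order.TTheory GRing.Theory Num.Theory.
Local Open Scope ring_scope.

(* Since F0 is a tournament, phi is injective on [m]; so if phi sent the root
   z_i to a vertex v of [m], the k_i out-neighbours of z_i would land injectively
   in the out-neighbourhood of v in F_j, which has at most outdeg(v) + 1 < k_i
   vertices.  The root w_i is handled dually with in-neighbourhoods. *)

Lemma tournament_hom_injective {m : nat} {T : finType} {F0 : rel 'I_m}
    {E : rel T} {f : 'I_m -> T} :
  is_tournament F0 -> irreflexive E -> is_hom F0 E f -> injective f.
Proof.
move=> [_ tourF0] irrE homf a b fab; apply/eqP/negPn/negP => /tourF0.
case Fab: (F0 a b); case Fba: (F0 b a) => // _.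
- by move: (homf _ _ Fab); rewrite fab irrE.
- by move: (homf _ _ Fba); rewrite fab irrE.
Qed.

Lemma hom_out_card {V V' : finType} {E : rel V} {E' : rel V'} {f : V -> V'} {x : V} :
  is_hom E E' f -> {in [set y | E x y] &, injective f} ->
  (#|[set y | E x y]| <= #|[set y | E' (f x) y]|)%N.
Proof.
move=> homf finj; rewrite -(card_in_imset finj); apply: subset_leq_card.
by apply/subsetP => fy /imsetP[y]; rewrite !inE => Exy ->; exact: homf.
Qed.

Lemma hom_in_card {V V' : finType} {E : rel V} {E' : rel V'} {f : V -> V'} {x : V} :
  is_hom E E' f -> {in [set y | E y x] &, injective f} ->
  (#|[set y | E y x]| <= #|[set y | E' y (f x)]|)%N.
Proof.
move=> homf finj.
by apply: (@hom_out_card _ _ (fun u v => E v u) (fun u v => E' v u)) => // u v; exact: homf.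
Qed.

Section Fbb.

Context {m : nat} {F0 : rel 'I_m}.
Hypothesis tourF0 : is_tournament F0.

Lemma Fbb_irreflexive K : irreflexive (Fbb F0 K).
Proof. case=> [a|[]] //=; exact/negbTE/tourF0.1. Qed.

Lemma Fbb_zr_outdeg K : (K <= m)%N -> (K <= #|[set y | Fbb F0 K (zr m) y]|)%N.
Proof.
move=> Km; have inj_inl_widen : injective (@inl _ bool \o widen_ord Km).
  by move=> a b [] /val_inj.
rewrite -[X in (X <= _)%N]card_ord -(card_imset _ inj_inl_widen).
by apply: subset_leq_card; apply/subsetP => y /imsetP[a _ ->]; rewrite inE /=.
Qed.

Lemma Fbb_wr_indeg K : (K <= m)%N -> (K <= #|[set y | Fbb F0 K y (wr m)]|)%N.
Proof.
move=> Km; have inj_inl_widen : injective (@inl _ bool \o widen_ord Km).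
  by move=> a b [] /val_inj.
rewrite -[X in (X <= _)%N]card_ord -(card_imset _ inj_inl_widen).
by apply: subset_leq_card; apply/subsetP => y /imsetP[a _ ->]; rewrite inE /=.
Qed.

(* Besides its out-neighbours in F0, the vertex v has exactly one out-neighbour
   among the roots: w if its label v + 1 is at most K, and z otherwise. *)
Lemma Fbb_inl_outdeg K v :
  (#|[set y | Fbb F0 K (inl v) y]| <= (outdeg F0 v).+1)%N.
Proof.
pose r : Vbb m := if (v < K)%N then wr m else zr m.
have sub : [set y | Fbb F0 K (inl v) y] \subset inl @: [set b | F0 v b] :|: [set r].
  apply/subsetP => -[b|[]]; rewrite !inE /= => Fvy.
  - by apply/orP; left; apply/imsetP; exists b; rewrite ?inE.
  - by apply/orP; right; rewrite /r ltnNge -ltnS Fvy.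
  - by apply/orP; right; rewrite /r Fvy.
rewrite (leq_trans (subset_leq_card sub)) // -addn1 (leq_trans (leq_card_setU _ _)) //.
by rewrite cards1 card_imset //; move=> ? ? [].
Qed.

Lemma Fbb_inl_indeg K v :
  (#|[set y | Fbb F0 K y (inl v)]| <= (indeg F0 v).+1)%N.
Proof.
pose r : Vbb m := if (v < K)%N then zr m else wr m.
have sub : [set y | Fbb F0 K y (inl v)] \subset inl @: [set b | F0 b v] :|: [set r].
  apply/subsetP => -[b|[]]; rewrite !inE /= => Fyv.
  - by apply/orP; left; apply/imsetP; exists b; rewrite ?inE.
  - by apply/orP; right; rewrite /r Fyv.
  - by apply/orP; right; rewrite /r ltnNge -ltnS Fyv.
rewrite (leq_trans (subset_leq_card sub)) // -addn1 (leq_trans (leq_card_setU _ _)) //.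
by rewrite cards1 card_imset //; move=> ? ? [].
Qed.

Context {K K' : nat} {phi : Vbb m -> Vbb m}.
Hypothesis hom_phi : is_hom (Fbb F0 K) (Fbb F0 K') phi.

Lemma Fbb_hom_injective_inl : injective (phi \o inl).
Proof.
apply: (tournament_hom_injective (E := Fbb F0 K') tourF0).
  exact: Fbb_irreflexive.
by move=> a b Fab; exact: (hom_phi (inl a) (inl b)).
Qed.

Lemma Fbb_hom_injective_nonroot (A : {set Vbb m}) :
  zr m \notin A -> wr m \notin A -> {in A &, injective phi}.
Proof.
move=> zA wA [a|[]] [b|[]] //; rewrite ?(negbTE zA) ?(negbTE wA) // => _ _.
by move/Fbb_hom_injective_inl ->.
Qed.

Hypothesis Km : (K <= m)%N.

Lemma Fbb_hom_zr_root :
  (forall v, (outdeg F0 v).+1 < K)%N -> phi (zr m) \in [:: zr m; wr m].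
Proof.
move=> deg_small; case phi_z: (phi (zr m)) => [v|[]] //; exfalso.
have inj : {in [set y | Fbb F0 K (zr m) y] &, injective phi}.
  by apply: Fbb_hom_injective_nonroot; rewrite inE.
have := leq_trans (Fbb_zr_outdeg K Km) (hom_out_card hom_phi inj).
rewrite phi_z => /leq_trans/(_ (Fbb_inl_outdeg K' v)).
by rewrite leqNgt deg_small.
Qed.

Lemma Fbb_hom_wr_root :
  (forall v, (indeg F0 v).+1 < K)%N -> phi (wr m) \in [:: zr m; wr m].
Proof.
move=> deg_small; case phi_w: (phi (wr m)) => [v|[]] //; exfalso.
have inj : {in [set y | Fbb F0 K y (wr m)] &, injective phi}.
  by apply: Fbb_hom_injective_nonroot; rewrite inE.
have := leq_trans (Fbb_wr_indeg K Km) (hom_in_card hom_phi inj).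
rewrite phi_w => /leq_trans/(_ (Fbb_inl_indeg K' v)).
by rewrite leqNgt deg_small.
Qed.

End Fbb.

Theorem claim4p4 (R : realType) (s m : nat) (F0 : rel 'I_m) (k : nat -> nat)
  (hs : (0 < s)%N) (hm : (0 < m)%N)
  (htour : is_tournament F0)
  (hI : forall u : 'I_m,
      (outdeg F0 u)%:R <= 2 * m%:R / 3 :> R /\ (indeg F0 u)%:R <= 2 * m%:R / 3 :> R)
  (hII : forall A1 A2 : {set 'I_m}, [disjoint A1 & A2] ->
      (#|A1|%:Z = Num.ceil (Num.sqrt (m%:R : R))) ->
      (#|A2|%:Z = Num.ceil (Num.sqrt (m%:R : R))) ->
      ~ (forall a1 a2, a1 \in A1 -> a2 \in A2 -> F0 a1 a2))
  (hIII : forall S : {set 'I_m},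
      2 * m%:R / 13 - Num.sqrt (m%:R : R) <= #|S|%:R -> has_dicycle F0 S)
  (hk : forall i : nat, (1 <= i <= s)%N ->
      2 * m%:R / 3 + 2 < (k i)%:R :> R /\ (k i)%:R < 5 * m%:R / 6 :> R)
  (hkdec : forall i : nat, (1 <= i < s)%N -> (k i.+1 + 1 < k i)%N)
  (i j : nat) (hi : (1 <= i <= s)%N) (hj : (1 <= j <= s)%N)
  (phi : Vbb m -> Vbb m)
  (hphi : is_hom (Fbb F0 (k i)) (Fbb F0 (k j)) phi) :
  phi (zr m) \in [:: zr m; wr m] /\ phi (wr m) \in [:: zr m; wr m].
Proof.
have [ki_large ki_small] := hk i hi.
have m_ge0 : 0 <= m%:R :> R := ler0n _ _.
have ki_le_m : (k i <= m)%N by rewrite -(ler_nat R); lra.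
have deg_lt d : d%:R <= 2 * m%:R / 3 :> R -> (d.+1 < k i)%N.
  by move=> hd; rewrite -(ltr_nat R) -addn1 natrD; lra.
split.
- apply: (Fbb_hom_zr_root htour hphi ki_le_m) => v.
  exact: deg_lt (hI v).1.
- apply: (Fbb_hom_wr_root htour hphi ki_le_m) => v.
  exact: deg_lt (hI v).2.
Qed.
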